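(* Let $X$ be a $0$-dimensional, $\mathbb N$-compact space of non-measurable cardinality. Then the evaluation map $\mathcal E:C_p(X,\mathbb Z)\to\widehat{\widehat{C_p(X,\mathbb Z)}}$ is a topological isomorphism of $C_p(X,\mathbb Z)$ onto its image.
   Context: Spaces are Tikhonov; $0$-dimensional means having a base of clopen sets; $\mathbb N$-compact means homeomorphic to a closed subspace of a product of copies of the discrete space $\mathbb N$. $C_p(X,\mathbb Z)$ is the group of continuous functions $X\to\mathbb Z$ ($\mathbb Z$ discrete) with the topology of pointwise convergence. For a topological abelian group $G$, $\widehat G$ is the group of continuous homomorphisms into $\mathbb T=\mathbb R/\mathbb Z$ with the compact-open topology, and $\mathcal E(g)(\chi)=\chi(g)$. *)

From HB Require Import structures.
From mathcomp Require Import all_boot all_order all_algebra.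
From mathcomp Require Import all_classical all_reals all_analysis.

Set Implicit Arguments.
Unset Strict Implicit.
Unset Printing Implicit Defensive.
Import Order.TTheory GRing.Theory Num.Theory.
Local Open Scope classical_set_scope.
Local Open Scope ring_scope.

Definition clopen_base_space (X : topologicalType) : Prop :=
  forall (U : set X) (x : X), open U -> U x ->
    exists V : set X, [/\ open V, closed V, V x & V `<=` U].

(* N-compact: homeomorphic to a closed subspace of a product N^I of copies of
   the discrete space N.  Written out: e : X -> (I -> nat) is injective,
   continuous (each coordinate is continuous into discrete N), open onto its
   image (for the product topology, whose basic open sets are the cylinders
   fixing finitely many coordinates), and its image is closed in N^I. *)
Definition N_compact (X : topologicalType) : Prop :=
  exists (I : Type) (e : X -> I -> nat),
    [/\ injective e,
        (forall (i : I) (n : nat), open [set x | e x i = n]),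
        (forall (U : set X) (x : X), open U -> U x ->
           exists F : set I, finite_set F /\
             (forall y, (forall i, F i -> e y i = e x i) -> U y)) &
        (forall g : I -> nat,
           (forall F : set I, finite_set F ->
              exists x, forall i, F i -> e x i = g i) ->
           exists x, e x = g)].

(* Ulam-measurable cardinality: the set admits a free countably complete
   ultrafilter (equivalently a non-trivial {0,1}-valued countably additive
   measure on all subsets vanishing on singletons). *)
Definition measurable_cardinality (T : Type) : Prop :=
  exists U : set (set T),
    [/\ ~ U set0,
        (forall A B : set T, U A -> A `<=` B -> U B),
        (forall A : set T, U A \/ U (~` A)),
        (forall F : nat -> set T, (forall n, U (F n)) -> U (\bigcap_n F n)) &
        (forall x : T, ~ U [set x])].

(* A group given by an ambient type, the subset of actual group elements, the
   addition, and the open sets (a set W is open when W restricted to the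
   group elements is open; points outside the carrier are ignored). *)
Record tgroup := TGroup {
  tg_car : Type;
  tg_set : set tg_car;
  tg_add : tg_car -> tg_car -> tg_car;
  tg_open : set tg_car -> Prop }.
Arguments tg_set : clear implicits.
Arguments tg_add : clear implicits.
Arguments tg_open : clear implicits.

(* topology on the subset C of A generated by the subbase S *)
Definition gen_open (A : Type) (C : set A) (S : set (set A)) (W : set A) : Prop :=
  forall a, C a -> W a ->
    exists Fs : set (set A),
      [/\ finite_set Fs, Fs `<=` S, (forall V, Fs V -> V a) &
          (forall b, C b -> (forall V, Fs V -> V b) -> W b)].

Definition tg_compact (G : tgroup) (K : set (tg_car G)) : Prop :=
  K `<=` tg_set G /\
  forall Us : set (set (tg_car G)), (forall U, Us U -> tg_open G U) ->
    K `<=` \bigcup_(U in Us) U ->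
    exists Fs : set (set (tg_car G)),
      [/\ finite_set Fs, Fs `<=` Us & K `<=` \bigcup_(U in Fs) U].

(* ---------- The circle group T = R/Z, represented by [0,1) ---------- *)

Definition tfrac (R : realType) (x : R) : R := x - (Num.floor x)%:~R.
Definition tadd (R : realType) (x y : R) : R := tfrac (x + y).
Definition in_T (R : realType) (t : R) : Prop := 0 <= t < 1.
(* quotient metric of R/Z *)
Definition tdist (R : realType) (x y : R) : R :=
  Num.min `|x - y| (1 - `|x - y|).
Definition T_open (R : realType) (U : set R) : Prop :=
  forall t, in_T t -> U t ->
    exists2 e : R, 0 < e & forall s, in_T s -> tdist t s < e -> U s.

Definition character (R : realType) (G : tgroup) (chi : tg_car G -> R) : Prop :=
  [/\ forall g, tg_set G g -> in_T (chi g),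
      forall g, ~ tg_set G g -> chi g = 0,
      forall g h, tg_set G g -> tg_set G h ->
                  chi (tg_add G g h) = tadd (chi g) (chi h) &
      forall U : set R, T_open U -> tg_open G (chi @^-1` U)].

Definition co_subbase (R : realType) (G : tgroup) : set (set (tg_car G -> R)) :=
  [set W | exists (K : set (tg_car G)) (U : set R),
     [/\ @tg_compact G K, T_open U & W = [set chi | forall g, K g -> U (chi g)]]].

Definition Dual (R : realType) (G : tgroup) : tgroup :=
  @TGroup (tg_car G -> R) (@character R G)
    (fun chi psi g => tadd (chi g) (psi g))
    (gen_open (@character R G) (@co_subbase R G)).

Definition evalE (R : realType) (G : tgroup) (g : tg_car G) :
  tg_car (Dual R (Dual R G)) :=
  fun chi => if `[< @character R G chi >] then chi g else 0.

Arguments character : clear implicits.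
Definition top_iso_onto_image (G H : tgroup) (f : tg_car G -> tg_car H) : Prop :=
  [/\ forall g, tg_set G g -> tg_set H (f g),
      forall g h, tg_set G g -> tg_set G h -> f (tg_add G g h) = tg_add H (f g) (f h),
      forall g h, tg_set G g -> tg_set G h -> f g = f h -> g = h,
      forall W, tg_open H W -> tg_open G (f @^-1` W) &
      forall U, tg_open G U ->
        exists2 W, tg_open H W & forall g, tg_set G g -> (U g <-> W (f g))].

Definition cont_Z (X : topologicalType) (f : X -> int) : Prop :=
  forall n : int, open [set x | f x = n].

(* pointwise topology: subbase {f | f x = n} *)
Definition Cp_Z (X : topologicalType) : tgroup :=
  @TGroup (X -> int) (@cont_Z X) (fun f g x => f x + g x)
    (gen_open (@cont_Z X)
       [set W | exists (x : X) (n : int), W = [set f | f x = n]]).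

From mathcomp Require Import all_boot all_order all_algebra.
From mathcomp Require Import all_classical all_reals all_analysis.
From mathcomp Require Import ring lra zify.

(* A continuous character chi of C_p(X, Z) has a finite support F (chi f = 0
   whenever f vanishes on F): chi maps a neighbourhood of 0 into the arc of
   radius 1/4 around 0, which contains no nontrivial subgroup of T.  When X is
   Hausdorff and 0-dimensional, a compact set K of characters even has a
   common finite support.  Otherwise the minimal supports of its members
   contain infinitely many points, which can be put into pairwise disjoint
   clopen sets C_m; this gives chi_m in K and h_m supported in C_m with
   chi_m(h_m) off the arc.  As h_m -> 0 pointwise, {0} u {h_k | k >= N} is
   compact, so the sets {chi | chi(h_k) in the arc for all k >= N} are open;
   they increase to a cover of K, yet none contains K.  Common supports make
   E continuous.  E is open onto its image because {g | g(x) = n} is cut out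
   by finitely many subbasic sets of the bidual: one built from the compact
   sequence of characters g |-> g(x)/2m mod 1, which bounds |g(x)|, and one
   from each character g |-> g(x)/2|n-k| mod 1, which excludes g(x) = k. *)

Set Implicit Arguments.
Unset Strict Implicit.
Unset Printing Implicit Defensive.
Import Order.TTheory GRing.Theory Num.Theory.
Local Open Scope classical_set_scope.
Local Open Scope ring_scope.
Section Circle.
Variable R : realType.
Implicit Types x y t c : R.

Lemma tfrac_inT x : in_T (tfrac x).
Proof.
rewrite /in_T /tfrac; have /andP[h1 h2] := floor_itv x.
by rewrite intrD in h2; apply/andP; split; lra.
Qed.

Lemma tfrac_id x : 0 <= x < 1 -> tfrac x = x.
Proof. by move=> x01; rewrite /tfrac (@floor_def _ x 0) ?subr0. Qed.

Lemma tfrac0 : tfrac 0 = 0 :> R.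
Proof. by rewrite tfrac_id // lexx ltr01. Qed.

Lemma tfracDz x (k : int) : tfrac (x + k%:~R) = tfrac x.
Proof. by rewrite /tfrac floorDrz ?intr_int // intrKfloor intrD; lra. Qed.

Lemma tfracDl x y : tfrac (tfrac x + y) = tfrac (x + y).
Proof.
have -> : tfrac x + y = x + y + (- Num.floor x)%:~R by rewrite /tfrac intrN; lra.
exact: tfracDz.
Qed.

Lemma tfracDr x y : tfrac (x + tfrac y) = tfrac (x + y).
Proof. by rewrite addrC tfracDl addrC. Qed.

Lemma tfracN x : tfrac (- tfrac x) = tfrac (- x).
Proof. by rewrite {2}/tfrac opprB addrC tfracDz. Qed.

Lemma tfracB_eq0 x y : tfrac x = tfrac y -> tfrac (x - y) = 0.
Proof. by move=> exy; rewrite -tfracDl exy tfracDl subrr tfrac0. Qed.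

Lemma tfrac_neq_half x : `|x| < 1/2 -> tfrac x != 1/2.
Proof.
move=> /[dup] + /ltr_normlP[xlt xgt]; case: (lerP 0 x) => x0.
  by rewrite tfrac_id ?x0 /=; [move=> _; apply/eqP; lra | lra].
rewrite -(tfracDz x 1) tfrac_id; [move=> _; apply/eqP | apply/andP; split]; lra.
Qed.

Lemma tfrac_half_norm (d : int) : d != 0 -> tfrac (d%:~R / (2 * `|d|%:~R)) = 1/2 :> R.
Proof.
move=> d0; have nd0 : `|d|%:~R != 0 :> R by rewrite intr_eq0 normr_eq0.
case: (ltrP 0 d) => dpos.
  have -> : d%:~R / (2 * `|d|%:~R) = 1/2 :> R.
    by rewrite gtr0_norm //; field; rewrite -(gtr0_norm dpos).
  by rewrite tfrac_id //; apply/andP; split; lra.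
have dneg : d < 0 by rewrite lt_neqAle d0.
have -> : d%:~R / (2 * `|d|%:~R) = - (1/2) :> R.
  by move: nd0; rewrite ltr0_norm // intrN oppr_eq0 => nd0; field.
by rewrite -(tfracDz _ 1) tfrac_id /=; [lra | apply/andP; split; lra].
Qed.

Lemma tdist_lt t s c : tdist t s < c -> `|t - s| < c \/ 1 - c < `|t - s|.
Proof. by rewrite /tdist gt_min => /orP[|]; [left | right; lra]. Qed.

Lemma T_open_neq c : in_T c -> T_open [set r | r <> c].
Proof.
move=> /andP[c0 c1] t /andP[t0 t1] tc; exists (tdist t c).
  have tc1 : `|t - c| < 1 by rewrite ltr_norml; lra.
  by rewrite /tdist lt_min normr_gt0 subr_eq0 subr_gt0 tc1 andbT; apply/eqP.
by move=> s _ tsc sc; move: tsc; rewrite sc ltxx.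
Qed.

Lemma T_open_near0 (U : set R) : T_open U -> U 0 ->
  exists2 e, 0 < e & forall y, `|y| < e -> U (tfrac y).
Proof.
move=> oU U0; have in0 : in_T (0 : R) by rewrite /in_T lexx ltr01.
have [e e0 eU] := oU 0 in0 U0.
exists (Num.min e (1/2)) => [|y]; first by rewrite lt_min e0 /=; lra.
rewrite lt_min => /andP[/ltr_normlP[ye1 ye2] /ltr_normlP[ylt ygt]].
apply: eU; first exact: tfrac_inT.
rewrite /tdist sub0r normrN gt_min; apply/orP.
case: (lerP 0 y) => y0.
  by left; rewrite tfrac_id ?ger0_norm ?y0 //=; lra.
by right; rewrite -(tfracDz y 1) tfrac_id ?ger0_norm /=; lra.
Qed.

Definition arc0 : set R := [set t | t < 1/4 \/ 3/4 < t].

Lemma T_open_arc0 : T_open arc0.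
Proof.
move=> t /andP[t0 t1] arct.
pose e := if t < 1/4 then 1/4 - t else t - 3/4.
have e0 : 0 < e by rewrite /e; case: ifP => ?; case: arct; lra.
exists e => // s /andP[s0 s1] /tdist_lt; rewrite /arc0 /e.
by case: ifP => ?; case: arct => ? /=; rewrite !ltr_norml !ltr_normr; lra.
Qed.

Lemma arc0_multiple c : 0 < c < 1 -> exists j : int, ~ arc0 (tfrac (j%:~R * c)).
Proof.
have small d : 0 < d < 1/4 -> exists j : int, ~ arc0 (tfrac (j%:~R * d)).
  move=> /andP[d0 d1]; set x := (4 * d)^-1.
  have xd : x * d = 1/4 by rewrite /x; field; lra.
  have x0 : 0 < x by rewrite invr_gt0; lra.
  exists (Num.floor x + 1).
  have lo : (Num.floor x)%:~R * d <= x * d by rewrite ler_pM2r ?floor_le.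
  have hi : x * d < (Num.floor x + 1)%:~R * d by rewrite ltr_pM2r ?floorD1_gt.
  rewrite intrD mulrDl mul1r in hi *.
  by rewrite tfrac_id /arc0 /=; lra.
move=> /andP[c0 c1]; case: (ltrP c (1/4)) => c14; first by apply: small; lra.
case: (lerP c (3/4)) => c34.
  by exists 1; rewrite mul1r tfrac_id /arc0 /=; lra.
have [j hj] := small (1 - c) ltac:(lra).
exists (- j); rewrite -(tfracDz _ j) intrN.
by have -> : - j%:~R * c + j%:~R = j%:~R * (1 - c) :> R by ring.
Qed.

Definition half_gap (n k : int) : R := (2 * `|n - k|%:~R)^-1.

Lemma tfrac_half_gap (n k : int) : k != n ->
  tfrac (n%:~R * half_gap n k) != tfrac (k%:~R * half_gap n k).
Proof.
move=> kn; apply/eqP => /tfracB_eq0.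
by rewrite -mulrBl -intrB tfrac_half_norm ?subr_eq0 1?eq_sym //; lra.
Qed.
End Circle.
Arguments arc0 {R}.
Arguments half_gap {R}.

Lemma filter_forall_finite T (F : set_system T) (I : choiceType) (D : set I)
    (P : I -> set T) :
  Filter F -> finite_set D -> (forall i, D i -> F (P i)) ->
  \forall t \near F, forall i, D i -> P i t.
Proof.
move=> FF /finite_fsetP[D' ->] DP.
by apply: filterS (filter_bigI FF DP) => t + i D'i; apply.
Qed.

Lemma trivIset_eventually_notin (T : Type) (C : nat -> set T) :
  trivIset setT C -> forall x, \forall m \near \oo, ~ C m x.
Proof.
move=> trivC x; case: (pselect (exists m0, C m0 x)) => [[m0 Cm0x]|nCx].
  near=> m; have m0m : (m0 < m)%N by near: m; exact: nbhs_infty_ge.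
  move=> Cmx; suff m0E : m0 = m by move: m0m; rewrite m0E ltnn.
  by apply: trivC => //; exists x.
by near=> m => Cmx; apply: nCx; exists m.
Unshelve. all: end_near.
Qed.

Definition int_range (N : nat) : seq int := [seq i%:Z - N%:Z | i <- iota 0 (2 * N).+1].

Lemma mem_int_range N k : (k \in int_range N) = (`|k| <= N)%N.
Proof.
apply/mapP/idP => [[i]|kN]; first by rewrite mem_iota => /andP[_ iN] ->; lia.
by exists (absz (k + N%:Z)); [rewrite mem_iota; lia | lia].
Qed.

Lemma gen_open_subbase (A : Type) (C : set A) (S : set (set A)) (V W : set A) :
  S V -> (forall a, C a -> V a <-> W a) -> gen_open C S W.
Proof.
move=> SV VW a Ca Wa; exists [set V]; split=> [|U ->|U ->|b Cb /(_ V erefl)].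
- exact: finite_set1.
- exact: SV.
- exact/(VW a Ca).
- by move/(VW b Cb).
Qed.

Lemma tg_compact1 (G : tgroup) (g : tg_car G) : tg_set G g -> @tg_compact G [set g].
Proof.
move=> Gg; split=> [_ -> //|Us _ cover].
have [U UsU Ug] := cover g erefl.
by exists [set U]; split=> [|V ->|y ->] //; exists U.
Qed.

Definition seq_tail (A : Type) (y : nat -> A) (l : A) (N : nat) : set A :=
  [set a | a = l \/ exists2 m, (N <= m)%N & a = y m].

Lemma tg_compact_tail (G : tgroup) (S : set (set (tg_car G))) (y : nat -> tg_car G)
    (l : tg_car G) (N : nat) :
  (forall U, tg_open G U -> gen_open (tg_set G) S U) ->
  tg_set G l -> (forall m, tg_set G (y m)) ->
  (forall V, S V -> V l -> \forall m \near \oo, V (y m)) ->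
  @tg_compact G (seq_tail y l N).
Proof.
move=> openS Gl Gy Scvg; split=> [a [->|[m _ ->]] // | Us Usopen cover].
have [U0 UsU0 U0l] := cover l (or_introl erefl).
have [Fs [finFs FsS Fsl FsU0]] := openS U0 (Usopen U0 UsU0) l Gl U0l.
have [M _ MU0] : \forall m \near \oo, U0 (y m).
  apply: filterS (filter_forall_finite _ finFs (P := fun V m => V (y m)) _) => [m|V FsV].
    exact: FsU0.
  exact: Scvg (FsS V FsV) (Fsl V FsV).
have [Uf Ufy] : {Uf : nat -> set (tg_car G) &
    forall m, Us (Uf m) /\ ((N <= m)%N -> Uf m (y m))}.
  apply: (@choice _ _ (fun m U => Us U /\ ((N <= m)%N -> U (y m)))) => m.
  case: (leqP N m) => [Nm|mN].
    have [U UsU Uy] := cover (y m) (or_intror (ex_intro2 _ _ m Nm erefl)).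
    by exists U.
  by exists U0; split=> // /(leq_trans mN); rewrite ltnn.
exists ([set U0] `|` Uf @` `I_M); split.
- by rewrite finite_setU; split; [exact: finite_set1 | exact: finite_image].
- by move=> U [-> // | [m _ <-]]; case: (Ufy m).
move=> a [->|[m Nm ->]]; first by exists U0 => //; left.
case: (leqP M m) => [Mm|mM]; first by exists U0; [left | exact: MU0].
by exists (Uf m); [right; exists m | case: (Ufy m) => _; apply].
Qed.

Lemma tg_compact_nondecreasing_cover (G : tgroup) (K : set (tg_car G))
    (O : nat -> set (tg_car G)) :
  @tg_compact G K -> (forall N, tg_open G (O N)) ->
  {homo O : m n / (m <= n)%N >-> m `<=` n} -> K `<=` \bigcup_N O N ->
  exists N, K `<=` O N.
Proof.
rewrite /tg_compact => -[_ cK] oO homoO KO.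
have [Fs [finFs FsO KFs]] :
    exists Fs, [/\ finite_set Fs, Fs `<=` range O & K `<=` \bigcup_(U in Fs) U].
  by apply: cK => [_ [N _ <-] // | x /KO[N _ ONx]]; exists (O N) => //; exists N.
have [N _ FsON] : \forall N \near \oo, forall U, Fs U -> U `<=` O N.
  apply: filter_forall_finite finFs _ => U /FsO[k _ <-].
  by exists k => // N /= kN; exact: homoO.
by exists N => x /KFs[U FsU Ux]; exact: FsON N (leqnn N) U FsU x Ux.
Qed.

Lemma evalE_character (R : realType) (G : tgroup) (g : tg_car G) (chi : tg_car G -> R) :
  character R G chi -> @evalE R G g chi = chi g.
Proof. by rewrite /evalE; case: asboolP. Qed.

Lemma evalE_add (R : realType) (G : tgroup) (g h : tg_car G) :
  tg_set G g -> tg_set G h ->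
  @evalE R G (tg_add G g h) = tg_add (Dual R (Dual R G)) (evalE g) (evalE h).
Proof.
move=> Gg Gh; apply: funext => chi /=; rewrite /evalE.
by case: asboolP => [[_ _ + _]|_]; [apply | rewrite /tadd addr0 tfrac0].
Qed.

Section PointwiseTopology.
Variable X : topologicalType.
Local Notation cont := (@cont_Z X).

Lemma cont_Z_cst (c : int) : cont (fun=> c).
Proof.
move=> n; have [->|cn] := eqVneq c n.
  by rewrite [X in open X](_ : _ = setT); [exact: openT | apply/seteqP].
rewrite [X in open X](_ : _ = set0); first exact: open0.
by apply/seteqP; split=> x //= cn'; move: cn; rewrite cn' eqxx.
Qed.

Lemma cont_Z_op2 (op : int -> int -> int) (f g : X -> int) :
  cont f -> cont g -> cont (fun x => op (f x) (g x)).
Proof.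
move=> cf cg n; rewrite [X in open X](_ : _ = \bigcup_(p in [set p | op p.1 p.2 = n])
    ([set x | f x = p.1] `&` [set x | g x = p.2])).
  by apply: bigcup_open => p _; apply: openI.
by apply/seteqP; split=> [x fgx | x [p /= <- [-> ->]]] //; exists (f x, g x).
Qed.

Lemma cont_Z_op1 (u : int -> int) (f : X -> int) : cont f -> cont (fun x => u (f x)).
Proof. by move=> cf; apply: (@cont_Z_op2 (fun a _ => u a) f f). Qed.

Definition Cp_nbhs (f : X -> int) : set_system (X -> int) :=
  [set W | exists F : seq X, forall g, cont g -> {in F, g =1 f} -> W g].

Lemma Cp_nbhs_filter f : Filter (Cp_nbhs f).
Proof.
constructor=> [|V W [F1 FV] [F2 FW]|V W VW [F FV]]; first by exists [::].
  exists (F1 ++ F2) => g cg gf; split; [apply: FV | apply: FW] => // x xF;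
  by apply: gf; rewrite mem_cat xF ?orbT.
by exists F => g cg gf; apply/VW/FV.
Qed.

Lemma Cp_openP (W : set (X -> int)) :
  tg_open (Cp_Z X) W <-> forall f, cont f -> W f -> Cp_nbhs f W.
Proof.
split=> [oW f cf Wf | nbhsW f cf Wf].
  have [Fs [finFs FsS Fsf FsW]] := oW f cf Wf.
  have FsN : forall V, Fs V -> Cp_nbhs f V.
    move=> V FsV; have [x [n eV]] := FsS V FsV.
    have := Fsf V FsV; rewrite eV => /= fx.
    by exists [:: x] => g _ /(_ x (mem_head _ _)); rewrite /= fx.
  have [F FFs] := filter_forall_finite (P := id) (Cp_nbhs_filter f) finFs FsN.
  by exists F => g cg gf; apply: FsW cg (FFs g cg gf).
have [F FW] := nbhsW f cf Wf.
exists [set` [seq [set g : X -> int | g x = f x] | x <- F]]; split.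
- exact: finite_seq.
- by move=> V /= /mapP[x _ ->]; exists x, (f x).
- by move=> V /= /mapP[x _ ->].
move=> g cg gV; apply: FW => // x xF.
by apply: (gV [set g | g x = f x]); apply/mapP; exists x.
Qed.

Lemma Cp_open_preimage (T : Type) (phi : (X -> int) -> T) (F : seq X) (U : set T) :
  (forall f g, cont f -> cont g -> {in F, f =1 g} -> phi f = phi g) ->
  tg_open (Cp_Z X) (phi @^-1` U).
Proof.
move=> phiF; apply/Cp_openP => f cf Uf.
by exists F => g cg gf; rewrite /= (phiF g f).
Qed.

Lemma Cp_compact_tail (h : nat -> X -> int) (f : X -> int) (N : nat) :
  cont f -> (forall m, cont (h m)) -> (forall x, \forall m \near \oo, h m x = f x) ->
  @tg_compact (Cp_Z X) (seq_tail h f N).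
Proof.
move=> cf ch hf; apply: (@tg_compact_tail (Cp_Z X) _ h f N (fun _ oU => oU)) => //.
move=> _ [x [n ->]] /= <-.
exact: hf.
Qed.
End PointwiseTopology.

Section Characters.
Variables (R : realType) (X : topologicalType).
Local Notation cont := (@cont_Z X).

Definition supported_on (chi : (X -> int) -> R) (F : seq X) :=
  forall f, cont f -> {in F, forall x, f x = 0} -> chi f = 0.

Variable chi : (X -> int) -> R.
Hypothesis chi_char : character R (Cp_Z X) chi.

Lemma char_inT f : cont f -> in_T (chi f).
Proof. by case: chi_char => + _ _ _; apply. Qed.

Lemma charD f g : cont f -> cont g ->
  chi (fun x => f x + g x) = tfrac (chi f + chi g).
Proof. by case: chi_char => _ _ + _; apply. Qed.

Lemma char0 : chi (fun=> 0) = 0.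
Proof.
have c0 : cont (fun=> 0) := cont_Z_cst X 0.
have := charD c0 c0; under eq_fun do rewrite addr0.
set c := chi _ => cc; have c_inT : in_T c := char_inT c0.
have : tfrac (c + c) = tfrac c by rewrite -cc !tfrac_id.
by move/tfracB_eq0; rewrite addrK tfrac_id.
Qed.

Lemma charN f : cont f -> chi (fun x => - f x) = tfrac (- chi f).
Proof.
move=> cf; have cNf : cont (fun x => - f x) := cont_Z_op1 _ cf.
rewrite -(tfrac_id (char_inT cNf)) -(addKr (chi f) (chi _)) -tfracDr -charD //.
by under eq_fun do rewrite subrr; rewrite char0 addr0.
Qed.

Lemma char_mulz (j : int) f : cont f ->
  chi (fun x => j * f x) = tfrac (j%:~R * chi f).
Proof.
move=> cf; have char_muln (n : nat) : chi (fun x => n%:Z * f x) = tfrac (n%:~R * chi f).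
  elim: n => [|n IHn].
    by under eq_fun do rewrite mul0r; rewrite char0 mul0r tfrac0.
  have cnf : cont (fun x => n%:Z * f x) := cont_Z_op1 _ cf.
  under eq_fun do rewrite intS mulrDl mul1r addrC.
  by rewrite charD // IHn tfracDl intS intrD; congr tfrac; ring.
case: j => n; first exact: char_muln.
have cnf : cont (fun x => n.+1%:Z * f x) := cont_Z_op1 _ cf.
under eq_fun do rewrite NegzE mulNr.
by rewrite charN // char_muln tfracN NegzE intrN mulNr.
Qed.

Lemma char_eq0 f : cont f -> (forall j : int, arc0 (chi (fun x => j * f x))) ->
  chi f = 0.
Proof.
move=> cf arc0f; apply: contrapT => chif0.
have /andP[chif_ge0 chif_lt1] := char_inT cf.
have chif_gt0 : 0 < chi f by rewrite lt_def chif_ge0 andbT; exact/eqP.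
have [j] := @arc0_multiple R (chi f) ltac:(by rewrite chif_gt0).
by rewrite -char_mulz // => /(_ (arc0f j)).
Qed.

Lemma char_supported : exists F, supported_on chi F.
Proof.
have c0 : cont (fun=> 0) := cont_Z_cst X 0.
have oarc0 : tg_open (Cp_Z X) (chi @^-1` arc0).
  by case: chi_char => _ _ _; apply; exact: T_open_arc0.
have [|F Farc0] := (Cp_openP _).1 oarc0 _ c0; first by rewrite /= char0 /arc0 /=; lra.
exists F => f cf f0; apply: char_eq0 => // j.
have cjf : cont (fun x => j * f x) := cont_Z_op1 _ cf.
by apply: Farc0 => // x /f0 /= ->; rewrite mulr0.
Qed.

Lemma supported_on_eq F f g : supported_on chi F -> cont f -> cont g ->
  {in F, f =1 g} -> chi f = chi g.
Proof.
move=> suppF cf cg fg.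
have cfg : cont (fun x => f x - g x) := cont_Z_op2 (fun a b => a - b) cf cg.
have -> : f = (fun x => (f x - g x) + g x) by apply: funext => x; rewrite subrK.
rewrite charD // suppF // => [|x /fg ->]; last by rewrite subrr.
by rewrite add0r tfrac_id //; exact: char_inT.
Qed.

Lemma supported_onS F F' : {subset F <= F'} -> supported_on chi F -> supported_on chi F'.
Proof. by move=> FF' suppF f cf f0; apply: suppF => // x /FF'; apply: f0. Qed.

Lemma minimal_support : exists F, supported_on chi F /\
  forall a, a \in F -> ~ supported_on chi [seq y <- F | y != a].
Proof.
pose P n := `[< exists2 F, size F = n & supported_on chi F >].
have exP : exists n, P n.
  by have [F suppF] := char_supported; exists (size F); apply/asboolP; exists F.
case: (ex_minnP exP) => _ /asboolP[F <- suppF] minF.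
exists F; split=> // a aF suppFa.
have := minF _ (asboolT (ex_intro2 _ _ _ erefl suppFa)).
have : has (predC (fun y => y != a)) F by apply/hasP; exists a; rewrite //= negbK.
rewrite has_count size_filter -(count_predC (fun y => y != a) F) => pos.
by apply/negP; rewrite -ltnNge -{1}(addn0 (count _ F)) ltn_add2l.
Qed.
End Characters.

Section ZeroDimensional.
Variable X : topologicalType.
Hypothesis X_T2 : hausdorff_space X.
Hypothesis X_zero_dim : clopen_base_space X.

Lemma clopen_separate (O : set X) (p : X) (F : seq X) : open O -> O p -> p \notin F ->
  exists V : set X, [/\ clopen V, V p, V `<=` O & {in F, forall x, ~ V x}].
Proof.
move=> oO Op /negP pF.
have oOF : open (O `&` ~` [set` F]).
  apply: openI => //; apply: closed_openC.
  exact: (accessible_finite_set_closed.1 (hausdorff_accessible X_T2)).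
have [V [oV cV Vp VOF]] := X_zero_dim oOF (conj Op pF).
by exists V; split=> // [x /VOF[] | x xF /VOF[_]].
Qed.

Lemma cont_Z_restrict (V : set X) (f : X -> int) : clopen V -> cont_Z f ->
  cont_Z (fun x => if `[< V x >] then f x else 0).
Proof.
move=> [oV cV] cf n.
rewrite [X in open X](_ : _ = (V `&` [set x | f x = n]) `|` (~` V `&` [set _ | 0 = n])).
  apply: openU; apply: openI => //; [exact: closed_openC | exact: cont_Z_cst].
by apply/seteqP; split=> x /=; case: asboolP => Vx; try tauto; case.
Qed.

Lemma clopen_split (A O : set X) : clopen O -> infinite_set (A `&` O) ->
  exists a C, [/\ A a, C a, clopen C, C `<=` O & infinite_set (A `&` (O `\` C))].
Proof.
move=> clO infAO.
have [p [Ap Op]] := infinite_setN0 infAO.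
have [q [[Aq Oq] qp]] := infinite_setN0 (infinite_setD infAO (finite_set1 p)).
have pq : p \notin [:: q] by rewrite inE eq_sym; apply/eqP.
have [V [clV Vp VO Vq]] := clopen_separate clO.1 Op pq.
have {}Vq : ~ V q by apply: Vq; rewrite mem_head.
case: (pselect (finite_set (A `&` (O `\` V)))) => finAOV; last by exists p, V.
exists q, (O `\` V); split=> //.
  by rewrite setDE; apply: clopenI clO (clopenC _ clV).
rewrite setDD (setIidr VO) => finAV; apply: infAO.
by rewrite -(setDUK VO) setIUr finite_setU; split.
Qed.

Lemma disjoint_clopen_seq (A : set X) : infinite_set A ->
  exists (a : nat -> X) (C : nat -> set X),
    [/\ forall m, A (a m), forall m, C m (a m), forall m, clopen (C m) & trivIset setT C].
Proof.
move=> infA; have [x0 _] := infinite_setN0 infA.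
pose split_spec O t := [/\ A t.1, t.2 t.1, clopen t.2, t.2 `<=` O &
  infinite_set (A `&` (O `\` t.2))].
have [step stepP] : {step : set X -> X * set X &
    forall O, clopen O -> infinite_set (A `&` O) -> split_spec O (step O)}.
  apply: (@choice _ _ (fun O t => clopen O -> infinite_set (A `&` O) -> split_spec O t)).
  move=> O; case: (pselect (clopen O /\ infinite_set (A `&` O))) => [[clO infAO]|nO].
    by have [a [C sp]] := clopen_split clO infAO; exists (a, C).
  by exists (x0, set0) => clO infAO; exfalso; apply: nO.
pose O n := iter n (fun O => O `\` (step O).2) setT.
have O_inv n : clopen (O n) /\ infinite_set (A `&` O n).
  elim: n => [|n [clOn infOn]]; first by rewrite /O /= setIT; split=> //; exact: clopenT.
  have [_ _ clC _ infOn1] := stepP _ clOn infOn.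
  by split=> //; rewrite /O /= setDE; apply: clopenI clOn (clopenC _ clC).
have stepO n : split_spec (O n) (step (O n)) by case: (O_inv n) => ? ?; apply: stepP.
have O_decr m n : (m <= n)%N -> O n `<=` O m.
  elim: n => [|n IHn]; first by rewrite leqn0 => /eqP ->.
  rewrite leq_eqVlt => /orP[/eqP -> //|/IHn Onm x [/Onm]] //.
have sep i j : (i < j)%N -> forall x, (step (O i)).2 x -> ~ (step (O j)).2 x.
  move=> ij x Cix Cjx; have [_ _ _ CjO _] := stepO j.
  by have [_ /(_ Cix)] := O_decr i.+1 j ij x (CjO x Cjx).
exists (fun m => (step (O m)).1), (fun m => (step (O m)).2).
split=> [m|m|m|i j _ _ [x [Cix Cjx]]]; try by case: (stepO m).
by case: (ltngtP i j) => // [ij|ji]; [case: (sep i j ij x) | case: (sep j i ji x)].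
Qed.
End ZeroDimensional.

Section CompactSetsOfCharacters.
Variables (R : realType) (X : topologicalType).
Hypothesis X_T2 : hausdorff_space X.
Hypothesis X_zero_dim : clopen_base_space X.
Local Notation cont := (@cont_Z X).
Local Notation Cp_char := (character R (Cp_Z X)).

Lemma support_point_witness chi F a (O : set X) : Cp_char chi ->
  supported_on chi F -> ~ supported_on chi [seq y <- F | y != a] -> open O -> O a ->
  exists h, [/\ cont h, (forall x, ~ O x -> h x = 0) & ~ arc0 (chi h)].
Proof.
move=> chi_char suppF not_suppFa oO Oa.
have [h0 [ch0 h0Fa chih0]] : exists h0, [/\ cont h0,
    {in [seq y <- F | y != a], forall x, h0 x = 0} & chi h0 <> 0].
  apply: contrapT => noh0; apply: not_suppFa => f cf f0.
  by apply: contrapT => chif; apply: noh0; exists f.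
have aFa : a \notin [seq y <- F | y != a] by rewrite mem_filter eqxx.
have [V [clV Va VO VFa]] := clopen_separate X_T2 X_zero_dim oO Oa aFa.
pose h1 x := if `[< V x >] then h0 x else 0.
have ch1 : cont h1 by apply: cont_Z_restrict.
have chih1 : chi h1 = chi h0.
  apply: supported_on_eq suppF _ _ _ => // x xF; rewrite /h1.
  case: asboolP => // nVx; have [xa|xa] := eqVneq x a; first by rewrite xa in nVx.
  by rewrite h0Fa // mem_filter xa.
have [j] : exists j : int, ~ arc0 (chi (fun x => j * h1 x)).
  apply: contrapT => /forallNP arc0h1; apply: chih0; rewrite -chih1.
  by apply: char_eq0 => // j; apply: contrapT; apply: arc0h1.
exists (fun x => j * h1 x); split=> //; first exact: cont_Z_op1.
by move=> x Ox; rewrite /h1; case: asboolP => [/VO|_]; rewrite ?mulr0.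
Qed.

Lemma no_common_support_witnesses (K : set ((X -> int) -> R)) : K `<=` Cp_char ->
  ~ (exists F, forall chi, K chi -> supported_on chi F) ->
  exists (chi : nat -> (X -> int) -> R) (h : nat -> X -> int),
    [/\ forall m, K (chi m), forall m, cont (h m),
        forall x, \forall m \near \oo, h m x = 0 & forall m, ~ arc0 (chi m (h m))].
Proof.
move=> Kchar noF.
have [ms msP] : {ms : ((X -> int) -> R) -> seq X & forall chi, Cp_char chi ->
    supported_on chi (ms chi) /\
    forall a, a \in ms chi -> ~ supported_on chi [seq y <- ms chi | y != a]}.
  apply: (@choice _ _ (fun chi F => Cp_char chi -> supported_on chi F /\
    forall a, a \in F -> ~ supported_on chi [seq y <- F | y != a])) => chi.
  case: (pselect (Cp_char chi)) => [chi_char|]; last by exists [::].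
  by have [F ?] := minimal_support chi_char; exists F.
have infA : infinite_set (\bigcup_(chi in K) [set` ms chi]).
  move=> /finite_seqP[F eA]; apply: noF; exists F => chi Kchi.
  apply: supported_onS (msP chi (Kchar _ Kchi)).1 => x xms.
  by have : [set` F] x by rewrite -eA; exists chi.
have [a [C [Aa Ca clC trivC]]] := disjoint_clopen_seq X_T2 X_zero_dim infA.
have [w wP] : {w : nat -> ((X -> int) -> R) * (X -> int) & forall m,
    [/\ K (w m).1, cont (w m).2, (forall x, ~ C m x -> (w m).2 x = 0) &
        ~ arc0 ((w m).1 (w m).2)]}.
  apply: (@choice _ _ (fun m p => [/\ K p.1, cont p.2,
    (forall x, ~ C m x -> p.2 x = 0) & ~ arc0 (p.1 p.2)])) => m.
  have [chi Kchi amschi] := Aa m; have [suppchi minchi] := msP chi (Kchar _ Kchi).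
  have [h [ch hC chih]] := support_point_witness (Kchar _ Kchi) suppchi
    (minchi _ amschi) (clC m).1 (Ca m).
  by exists (chi, h).
exists (fun m => (w m).1), (fun m => (w m).2); split=> [m|m|x|m]; try by case: (wP m).
apply: filterS (trivIset_eventually_notin trivC x) => m.
by case: (wP m) => _ _ + _; apply.
Qed.

Lemma compact_characters_supported (K : set ((X -> int) -> R)) :
  @tg_compact (Dual R (Cp_Z X)) K -> exists F, forall chi, K chi -> supported_on chi F.
Proof.
move=> cK; have Kchar : K `<=` Cp_char by case: cK.
apply: contrapT => /(no_common_support_witnesses Kchar)[chi [h [Kchi ch h0 chih]]].
pose O N : set ((X -> int) -> R) :=
  [set psi | forall g, seq_tail h (fun=> 0) N g -> arc0 (psi g)].
have O_open N : tg_open (Dual R (Cp_Z X)) (O N).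
  apply: (gen_open_subbase (V := O N)) => //.
  exists (seq_tail h (fun=> 0) N), arc0; split=> //; last exact: T_open_arc0.
  by apply: Cp_compact_tail => //; exact: cont_Z_cst.
have O_homo : {homo O : m n / (m <= n)%N >-> m `<=` n}.
  move=> m n mn psi Ompsi g [->|[k nk ->]]; apply: Ompsi; [left | right] => //.
  by exists k => //; apply: leq_trans nk.
have K_cover : K `<=` \bigcup_N O N.
  move=> psi Kpsi; have psi_char := Kchar _ Kpsi.
  have [F suppF] := char_supported psi_char.
  have [N _ hN] := filter_forall_finite (P := fun x m => h m x = 0) _ (finite_seq F)
    (fun x _ => h0 x).
  exists N => // g [->|[m Nm ->]]; first by rewrite /= (char0 psi_char) /arc0 /=; lra.
  by rewrite /= suppF /arc0 //=; [lra | move=> x xF; apply: hN Nm x xF].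
have [N KO] := tg_compact_nondecreasing_cover cK O_open O_homo K_cover.
by apply: (chih N); apply: (KO _ (Kchi N)); right; exists N.
Qed.
End CompactSetsOfCharacters.

Section PointCharacters.
Variables (R : realType) (X : topologicalType).
Local Notation cont := (@cont_Z X).
Local Notation Cp_char := (character R (Cp_Z X)).
Local Notation DG := (Dual R (Cp_Z X)).
Local Notation E := (@evalE R (Cp_Z X)).

Definition point_char (x : X) (t : R) : (X -> int) -> R :=
  fun g => if `[< cont g >] then tfrac ((g x)%:~R * t) else 0.

Lemma point_charE x t g : cont g -> point_char x t g = tfrac ((g x)%:~R * t).
Proof. by rewrite /point_char; case: asboolP. Qed.

Lemma point_char_character x t : Cp_char (point_char x t).
Proof.
split=> [g cg|g ncg|g h cg ch|U _].
- by rewrite point_charE //; exact: tfrac_inT.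
- by rewrite /point_char; case: asboolP.
- have cgh : cont (fun y => g y + h y) := cont_Z_op2 (fun a b => a + b) cg ch.
  by rewrite /tadd !point_charE // tfracDl tfracDr intrD mulrDl.
apply: (@Cp_open_preimage _ _ _ [:: x]) => f g cf cg /(_ x (mem_head _ _)) fg.
by rewrite !point_charE // fg.
Qed.

Lemma Cp_compact_bounded (L : set (X -> int)) x : @tg_compact (Cp_Z X) L ->
  exists B : nat, forall g, L g -> (`|g x| <= B)%N.
Proof.
move=> [_ cL].
have [Fs [finFs FsW LFs]] : exists Fs, [/\ finite_set Fs,
    Fs `<=` [set W | exists k : int, W = [set f | f x = k]] & L `<=` \bigcup_(W in Fs) W].
  apply: cL => [_ [k ->]|g _]; last by exists [set f | f x = g x] => //; exists (g x).
  by apply: (gen_open_subbase (V := [set f | f x = k])) => //; exists x, k.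
have [B _ FsB] : \forall B \near \oo, forall W, Fs W -> forall f, W f -> (`|f x| <= B)%N.
  apply: filter_forall_finite finFs _ => _ /FsW[k ->].
  by apply: filterS (nbhs_infty_ge `|k|%N) => B kB f /= ->.
by exists B => g /LFs[W FsW' Wg]; exact: FsB B (leqnn B) W FsW' g Wg.
Qed.

Definition point_char_tail x N : set ((X -> int) -> R) :=
  seq_tail (fun m => point_char x (2 * m%:R)^-1) (point_char x 0) N.

Lemma point_char_tail_compact x N : @tg_compact DG (point_char_tail x N).
Proof.
apply: (@tg_compact_tail DG _ _ _ N (fun _ oU => oU)) => [|m|_ [L [U [cL oU ->]]] L0].
- exact: point_char_character.
- exact: point_char_character.
have Lcont : L `<=` cont by case: cL.
case: (pselect (exists g, L g)) => [[g0 Lg0]|noL]; last first.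
  by apply: nearW => m g Lg; case: noL; exists g.
have U0 : U 0.
  by have := L0 g0 Lg0; rewrite /= point_charE ?mulr0 ?tfrac0 //; exact: Lcont.
have [e e0 Ue] := T_open_near0 oU U0.
have [B LB] := Cp_compact_bounded x cL.
near=> m => g Lg; rewrite /= point_charE; last exact: Lcont.
have mB : B%:R / e + 1 <= m%:R :> R by near: m; exact: nbhs_infty_ger.
have Bem : B%:R < e * m%:R.
  have eBe : e * (B%:R / e + 1) = B%:R + e by field; exact: lt0r_neq0.
  have : e * (B%:R / e + 1) <= e * m%:R by rewrite ler_pM2l.
  by rewrite eBe; lra.
have Be0 : 0 <= B%:R / e :> R by rewrite divr_ge0 // ltW.
have m0 : 0 < m%:R :> R by lra.
have gxB : `|(g x)%:~R| <= B%:R :> R by rewrite -intr_norm -natr_absz ler_nat LB.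
have m2 : 0 < 2 * m%:R :> R by lra.
by apply: Ue; rewrite normrM normfV (gtr0_norm m2) ltr_pdivrMr //; nra.
Unshelve. all: end_near.
Qed.

Definition bound_test x M : set (((X -> int) -> R) -> R) :=
  [set Phi | forall chi, point_char_tail x M chi -> Phi chi <> 1/2].

Lemma bound_test_subbase x M : @co_subbase R DG (bound_test x M).
Proof.
exists (point_char_tail x M), [set r | r <> 1/2]; split=> //.
- exact: point_char_tail_compact.
- by apply: T_open_neq; rewrite /in_T; apply/andP; split; lra.
Qed.

Lemma evalE_point_char g x t : cont g -> E g (point_char x t) = tfrac ((g x)%:~R * t).
Proof.
by move=> cg; rewrite evalE_character ?point_charE //; exact: point_char_character.
Qed.

Lemma evalE_bound_test g x M : cont g -> bound_test x M.+1 (E g) <-> (`|g x| <= M)%N.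
Proof.
move=> cg; split=> [gxM|gxM chi [->|[m Mm ->]]]; rewrite ?evalE_point_char //.
- rewrite leqNgt; apply/negP => Mgx.
  have /gxM : point_char_tail x M.+1 (point_char x (2 * `|g x|%N%:R)^-1).
    by right; exists `|g x|%N.
  apply; rewrite evalE_point_char // natr_absz.
  by apply: tfrac_half_norm; apply: contraTneq Mgx => ->.
- by rewrite mulr0 tfrac0; lra.
apply/eqP; apply: tfrac_neq_half.
have m2 : 0 < 2 * m%:R :> R by rewrite mulr_gt0 // ltr0n (leq_trans _ Mm).
rewrite normrM normfV (gtr0_norm m2) ltr_pdivrMr // -intr_norm -natr_absz.
have : (`|g x|%N%:R : R) < m%:R by rewrite ltr_nat (leq_ltn_trans gxM).
lra.
Qed.

Definition avoid_test x t c : set (((X -> int) -> R) -> R) :=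
  [set Phi | forall chi, [set point_char x t] chi -> Phi chi <> c].

Lemma avoid_test_subbase x t c : in_T c -> @co_subbase R DG (avoid_test x t c).
Proof.
exists [set point_char x t], [set r | r <> c]; split=> //; last exact: T_open_neq.
exact/tg_compact1/point_char_character.
Qed.

Lemma evalE_avoid_test g x t c : cont g ->
  avoid_test x t c (E g) <-> tfrac ((g x)%:~R * t) <> c.
Proof.
by move=> cg; split=> [/(_ _ erefl)|gxc _ ->]; rewrite evalE_point_char.
Qed.

(* Subbasic sets of the bidual whose traces on the image of E cut out
   {g | g x = n}: the first forces |g x| <= |n|, the others exclude each
   remaining value k. *)
Definition pin_tests x n : seq (set (((X -> int) -> R) -> R)) :=
  bound_test x `|n|%N.+1 ::
  [seq avoid_test x (half_gap n k) (tfrac (k%:~R * half_gap n k))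
     | k <- int_range `|n|%N & k != n].

Definition pin_nbhd x n : set (((X -> int) -> R) -> R) :=
  [set Phi | forall Q, Q \in pin_tests x n -> Q Phi].

Lemma pin_tests_subbase x n Q : Q \in pin_tests x n -> @co_subbase R DG Q.
Proof.
rewrite inE => /orP[/eqP ->|/mapP[k _ ->]]; first exact: bound_test_subbase.
exact/avoid_test_subbase/tfrac_inT.
Qed.

Lemma evalE_pin_nbhd g x n : cont g -> pin_nbhd x n (E g) <-> g x = n.
Proof.
move=> cg; split=> [pinE|gxn Q].
  have /(evalE_bound_test _ _ cg) gx_le := pinE _ (mem_head _ _).
  apply/eqP; apply: contraT => gxn.
  pose t : R := half_gap n (g x).
  have /pinE : avoid_test x t (tfrac ((g x)%:~R * t)) \in pin_tests x n.
    rewrite inE; apply/orP; right; apply/mapP; exists (g x) => //.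
    by rewrite mem_filter gxn mem_int_range.
  by move/(evalE_avoid_test _ _ _ cg)/(_ erefl).
rewrite inE => /orP[/eqP ->|/mapP[k]]; first by apply/evalE_bound_test; rewrite // gxn.
rewrite mem_filter => /andP[kn _] ->; apply/evalE_avoid_test => //.
by rewrite gxn; apply/eqP; exact: tfrac_half_gap.
Qed.
End PointCharacters.

Section EvaluationMap.
Variables (R : realType) (X : topologicalType).
Hypothesis X_T2 : hausdorff_space X.
Hypothesis X_zero_dim : clopen_base_space X.
Local Notation cont := (@cont_Z X).
Local Notation Cp_char := (character R (Cp_Z X)).
Local Notation DG := (Dual R (Cp_Z X)).
Local Notation E := (@evalE R (Cp_Z X)).

Lemma character_tadd chi psi : Cp_char chi -> Cp_char psi ->
  Cp_char (fun g => tadd (chi g) (psi g)).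
Proof.
move=> chi_char psi_char; split=> [g _|g ncg|g h cg ch|U _].
- exact: tfrac_inT.
- case: chi_char => _ + _ _; case: psi_char => _ + _ _ => -> // -> //.
  by rewrite /tadd addr0 tfrac0.
- rewrite /tadd (charD chi_char) // (charD psi_char) // !tfracDl !tfracDr.
  by congr tfrac; ring.
have [F1 supp1] := char_supported chi_char; have [F2 supp2] := char_supported psi_char.
apply: (@Cp_open_preimage _ _ _ (F1 ++ F2)) => f g cf cg fg.
rewrite (supported_on_eq chi_char supp1 cf cg) ?(supported_on_eq psi_char supp2 cf cg) //;
  by move=> x xF; apply: fg; rewrite mem_cat xF ?orbT.
Qed.

Lemma evalE_dual_character g : cont g -> character R DG (E g).
Proof.
move=> cg; split=> [chi chi_char|chi nchi|chi psi chi_char psi_char|U oU].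
- by rewrite evalE_character //; exact: char_inT.
- by rewrite /evalE; case: asboolP.
- by rewrite /= !evalE_character //; exact: character_tadd.
pose V := [set chi | forall h, [set g] h -> U (chi h)].
apply: (gen_open_subbase (V := V)) => [|chi chi_char].
  by exists [set g], U; split=> //; exact: tg_compact1.
by rewrite /= evalE_character //; split=> [/(_ g erefl) | Ug _ ->].
Qed.

Lemma evalE_subbase_nbhs f (V : set (((X -> int) -> R) -> R)) :
  cont f -> @co_subbase R DG V -> V (E f) -> Cp_nbhs f (E @^-1` V).
Proof.
move=> cf [K [U [cK _ ->]]] KUf.
have [F suppF] := compact_characters_supported X_T2 X_zero_dim cK.
have Kchar : K `<=` Cp_char by case: cK.
exists F => g cg gf chi Kchi; have chi_char := Kchar _ Kchi.
have := KUf chi Kchi; rewrite /= !evalE_character //.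
by rewrite (supported_on_eq chi_char (suppF _ Kchi) cg cf).
Qed.

Lemma evalE_continuous W : tg_open (Dual R DG) W -> tg_open (Cp_Z X) (E @^-1` W).
Proof.
move=> oW; apply/Cp_openP => f cf Wf.
have [Fs [finFs FsS FsEf FsW]] := oW (E f) (evalE_dual_character cf) Wf.
have [F FFs] := filter_forall_finite (P := fun V g => V (E g)) (Cp_nbhs_filter f) finFs
  (fun V FsV => evalE_subbase_nbhs cf (FsS V FsV) (FsEf V FsV)).
by exists F => g cg gf; apply: FsW (FFs g cg gf); exact: evalE_dual_character.
Qed.

Lemma evalE_injective g h : cont g -> cont h -> E g = E h -> g = h.
Proof.
move=> cg ch Egh; apply: funext => x; apply/esym; apply/(evalE_pin_nbhd R _ _ ch).
by rewrite -Egh; apply/(evalE_pin_nbhd R _ _ cg).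
Qed.

Lemma evalE_open_image U : tg_open (Cp_Z X) U ->
  exists2 W, tg_open (Dual R DG) W & forall g, cont g -> (U g <-> W (E g)).
Proof.
move=> oU; pose pinned (s : seq (X * int)) g := forall p, p \in s -> g p.1 = p.2.
exists [set Phi | exists2 s, (forall g, cont g -> pinned s g -> U g) &
                             forall p, p \in s -> pin_nbhd p.1 p.2 Phi].
  move=> Phi _ [s sU sPhi].
  exists [set` flatten [seq pin_tests R p.1 p.2 | p <- s]]; split=> //.
  - by move=> Q /flattenP[_ /mapP[p _ ->]]; exact: pin_tests_subbase.
  - by move=> Q /flattenP[_ /mapP[p ps ->] Qp]; exact: sPhi p ps Q Qp.
  move=> Psi _ Psi_tests; exists s => // p ps Q Qp; apply: Psi_tests.
  by apply/flattenP; exists (pin_tests R p.1 p.2) => //; apply/mapP; exists p.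
move=> g cg; split=> [Ug|[s sU sEg]]; last first.
  by apply: sU => // p /sEg /(evalE_pin_nbhd R _ _ cg).
have [F FU] := (Cp_openP U).1 oU g cg Ug.
exists [seq (x, g x) | x <- F] => [f cf fF|_ /mapP[x _ ->]].
  by apply: FU => // x xF; apply: (fF (x, g x)); apply/mapP; exists x.
exact/(evalE_pin_nbhd R _ _ cg).
Qed.
End EvaluationMap.

Theorem proposition6p5 (R : realType) (X : topologicalType) :
  hausdorff_space X -> completely_regular_space X ->
  clopen_base_space X -> N_compact X -> ~ measurable_cardinality X ->
  top_iso_onto_image (@evalE R (Cp_Z X)).
Proof.
move=> X_T2 _ X_zero_dim _ _; split.
- by move=> g; exact: evalE_dual_character.
- exact: evalE_add.
- exact: evalE_injective.
- exact: evalE_continuous.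
- exact: evalE_open_image.
Qed.
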